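(* For every real number $\alpha\ge 1$ there exist real numbers $\alpha_0\le\alpha<\alpha_1$ such that, with $I_\alpha=[\alpha_0,\alpha_1)$: for every $\beta\in I_\alpha$ the sequences $(P^\beta_i)_{i\ge0}$ and $(P^\alpha_i)_{i\ge0}$ are identical, and for every real $\beta\ge 1$ with $\beta\notin I_\alpha$ the two sequences are not identical, i.e.\ there is an index $i$ with $P^\alpha_i\neq P^\beta_i$.
   Context: For a real number $\alpha\ge 1$, define the integer sequence $(P^\alpha_i)_{i\ge 0}$ by $P^\alpha_0=0$, $P^\alpha_1=1$, and for $k\ge 1$, $P^\alpha_{k+1}=P^\alpha_k+P^\alpha_j$, where $j\ge1$ is the unique index with $\alpha P^\alpha_{j-1}<P^\alpha_k\le \alpha P^\alpha_j$. (By a theorem of Schwenk, the terms of this sequence are exactly the pile sizes $n$ for which the initial position of $\alpha$-\textsc{tag} is a second-player win, where $\alpha$-\textsc{tag} is the game: a single pile of $n$ stones; players alternately remove at least one stone; the first move removes at most $n-1$ stones; each later move removes at most $\alpha$ times the number removed on the previous move; the player unable to move loses.) *)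

From Stdlib Require Import Reals List.
Import ListNotations.
Open Scope R_scope.

(* first j in j, j+1, ..., j+fuel-1 with p j = true (fallback: j+fuel) *)
Fixpoint least_from (p : nat -> bool) (j fuel : nat) : nat :=
  match fuel with
  | O => j
  | S f => if p j then j else least_from p (S j) f
  end.

Definition idx_ok (alpha : R) (l : list nat) (k j : nat) : bool :=
  let Pk := INR (nth k l 0%nat) in
  if Rlt_dec (alpha * INR (nth (pred j) l 0%nat)) Pk then
    if Rle_dec Pk (alpha * INR (nth j l 0%nat)) then true else false
  else false.

(* Plist alpha n = [P_0; P_1; ...; P_{n+1}] *)
Fixpoint Plist (alpha : R) (n : nat) : list nat :=
  match n with
  | O => [0%nat; 1%nat]
  | S m =>
      let l := Plist alpha m in
      let k := S m in
      let j := least_from (idx_ok alpha l k) 1 k in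
      l ++ [(nth k l 0 + nth j l 0)%nat]
  end.

Definition P (alpha : R) (i : nat) : nat := nth i (Plist alpha i) 0%nat.

From Stdlib Require Import Reals Lra Lia List Classical Arith.
From Coquelicot Require Import Rcomplements.
Import ListNotations.
Open Scope R_scope.

(* Write j_k for the index used at step k, so that P_{k+1} = P_k + P_{j_k}.  The
   sequences P^β and P^α coincide iff β satisfies every constraint
   β P_{j_k - 1} < P_k <= β P_{j_k} met by the α-indices, i.e. iff
     sup_k P_k / P_{j_k}  <=  β  <  inf_{j_k >= 2} P_k / P_{j_k - 1}.
   The supremum is α0.  For α1, the gap k - j_k is nondecreasing and bounded by α^2,
   hence eventually constant, say s.  From then on P_{k+1} = P_k + P_{k-s}, and the
   upper constraint at k+1 is the sum of those at k and at k-s; so the infimum is a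
   minimum over finitely many k, and in particular it exceeds α. *)

Lemma least_from_unique (p : nat -> bool) (fuel : nat) : forall j m,
  (j <= m < j + fuel)%nat -> p m = true ->
  (forall m', (j <= m' < j + fuel)%nat -> p m' = true -> m' = m) ->
  least_from p j fuel = m.
Proof.
  induction fuel as [|f IH]; intros j m Hr Hm Hu; [lia|].
  simpl. destruct (p j) eqn:E.
  - apply Hu; [lia|exact E].
  - apply IH; [|exact Hm|].
    + assert (j <> m) by (intros ->; congruence). lia.
    + intros m' Hr' Hm'. apply Hu; [lia|exact Hm'].
Qed.

Lemma lt_of_succ_lt (Q : nat -> nat) n :
  (forall i, (i < n)%nat -> (Q i < Q (S i))%nat) ->
  forall i j, (i < j <= n)%nat -> (Q i < Q j)%nat.
Proof.
  intros H i j [Hij Hjn]. induction Hij as [|m Hm IH]; [apply H; lia|].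
  specialize (IH ltac:(lia)). specialize (H m ltac:(lia)). lia.
Qed.

Lemma list_argmin {A : Type} (f : A -> R) (l : list A) :
  l <> [] -> exists x, In x l /\ forall y, In y l -> f x <= f y.
Proof.
  induction l as [|x l IH]; intros Hl; [congruence|].
  destruct l as [|y l].
  - exists x. split; [left; reflexivity|]. intros z [<-|[]]. lra.
  - destruct (IH ltac:(discriminate)) as [m [Hm Hmin]].
    destruct (Rle_dec (f x) (f m)).
    + exists x. split; [left; reflexivity|].
      intros z [<-|Hz]; [lra|]. specialize (Hmin z Hz). lra.
    + exists m. split; [right; exact Hm|].
      intros z [<-|Hz]; [lra|exact (Hmin z Hz)].
Qed.

Lemma eventually_constant (d : nat -> nat) (D : nat) :
  (forall k, (d k <= d (S k))%nat) -> (forall k, (d k <= D)%nat) ->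
  exists K, forall k, (K <= k)%nat -> d k = d K.
Proof.
  intros Hmon HD.
  assert (Hle : forall k k', (k <= k')%nat -> (d k <= d k')%nat).
  { intros k k' Hk. induction Hk as [|k' _ IH]; [lia|]. specialize (Hmon k'). lia. }
  assert (G : forall n k0, (D - d k0 <= n)%nat ->
            exists K, forall k, (K <= k)%nat -> d k = d K).
  { induction n as [|n IH]; intros k0 Hn;
      (destruct (classic (exists k, (k0 <= k)%nat /\ d k <> d k0)) as [[k [Hk Hne]]|Hno];
       [specialize (Hle k0 k Hk)
       |exists k0; intros k Hk; apply NNPP; intros Hne; apply Hno; now exists k]).
    - specialize (HD k). lia.
    - apply (IH k). lia. }
  apply (G D 0%nat). lia.
Qed.

Definition J (a : R) (k : nat) : nat := least_from (idx_ok a (Plist a (pred k)) k) 1 k.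

Definition bracket (b : R) (Q : nat -> nat) (k j : nat) : Prop :=
  b * INR (Q (pred j)) < INR (Q k) <= b * INR (Q j).

Lemma Plist_S a m : Plist a (S m) =
  Plist a m ++ [(nth (S m) (Plist a m) 0 + nth (J a (S m)) (Plist a m) 0)%nat].
Proof. reflexivity. Qed.

Lemma Plist_length a n : length (Plist a n) = S (S n).
Proof. induction n as [|n IH]; [reflexivity|]. rewrite Plist_S, length_app, IH. simpl. lia. Qed.

Lemma nth_Plist_add a n m i : (i < S (S n))%nat ->
  nth i (Plist a (m + n)) 0%nat = nth i (Plist a n) 0%nat.
Proof.
  intros Hi. induction m as [|m IH]; [reflexivity|].
  change (S m + n)%nat with (S (m + n)).
  rewrite Plist_S, app_nth1; [exact IH|]. rewrite Plist_length. lia.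
Qed.

Lemma nth_Plist a n i : (i <= S n)%nat -> nth i (Plist a n) 0%nat = P a i.
Proof.
  intros Hi. unfold P.
  rewrite <- (nth_Plist_add a n i i), <- (nth_Plist_add a i n i), Nat.add_comm by lia.
  reflexivity.
Qed.

Lemma P_0 a : P a 0 = 0%nat.
Proof. reflexivity. Qed.

Lemma P_1 a : P a 1 = 1%nat.
Proof. reflexivity. Qed.

Lemma P_S_of_J_le a k : (1 <= k)%nat -> (J a k <= k)%nat ->
  P a (S k) = (P a k + P a (J a k))%nat.
Proof.
  intros Hk HJ. destruct k as [|m]; [lia|].
  rewrite <- (nth_Plist a (S m) (S (S m))), Plist_S, app_nth2 by (rewrite ?Plist_length; lia).
  rewrite Plist_length, Nat.sub_diag. simpl nth.
  rewrite !nth_Plist by lia. reflexivity.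
Qed.

Lemma idx_ok_iff a m j : (j <= S m)%nat ->
  idx_ok a (Plist a m) (S m) j = true <-> bracket a (P a) (S m) j.
Proof.
  intros Hj. unfold idx_ok, bracket. cbv zeta.
  rewrite !nth_Plist by lia.
  destruct (Rlt_dec _ _); [destruct (Rle_dec _ _)|]; split; intuition congruence.
Qed.

Lemma bracket_exists b (Q : nat -> nat) k n :
  Q 0%nat = 0%nat -> (0 < Q k)%nat -> (1 <= n)%nat -> INR (Q k) <= b * INR (Q n) ->
  exists j, (1 <= j <= n)%nat /\ bracket b Q k j.
Proof.
  intros HQ0 Hk. induction n as [|n IH]; intros Hn Hle; [lia|].
  destruct (Rlt_dec (b * INR (Q n)) (INR (Q k))) as [Hlt|Hge].
  - exists (S n). split; [lia|]. split; assumption.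
  - destruct n as [|n].
    + rewrite HQ0, INR_0, Rmult_0_r in Hge. apply lt_0_INR in Hk. lra.
    + destruct (IH ltac:(lia) ltac:(lra)) as [j [Hj Hb]]. exists j. split; [lia|exact Hb].
Qed.

Lemma bracket_unique b (Q : nat -> nat) k j1 j2 : 0 <= b ->
  (forall i i', (i <= i' <= k)%nat -> (Q i <= Q i')%nat) ->
  (1 <= j1 <= k)%nat -> (1 <= j2 <= k)%nat ->
  bracket b Q k j1 -> bracket b Q k j2 -> j1 = j2.
Proof.
  intros Hb Hmon Hj1 Hj2 [A1 B1] [A2 B2].
  assert (Hcross : forall j j', (j < j' <= k)%nat ->
            b * INR (Q j) <= b * INR (Q (pred j'))).
  { intros j j' Hjj. apply Rmult_le_compat_l, le_INR, Hmon; [exact Hb|lia]. }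
  destruct (lt_eq_lt_dec j1 j2) as [[Hlt|Heq]|Hlt]; [|exact Heq|].
  - specialize (Hcross j1 j2 ltac:(lia)). lra.
  - specialize (Hcross j2 j1 ltac:(lia)). lra.
Qed.

Lemma bracket_prefix_ext b (Q Q' : nat -> nat) k j :
  (forall i, (i <= k)%nat -> Q i = Q' i) -> (j <= k)%nat ->
  bracket b Q k j -> bracket b Q' k j.
Proof. intros HQ Hj. unfold bracket. rewrite !HQ by lia. tauto. Qed.

Section Increasing.

Variable a : R.
Hypothesis Ha : 1 <= a.

Lemma J_spec_of_prefix k : (1 <= k)%nat ->
  (forall i, (i < k)%nat -> (P a i < P a (S i))%nat) ->
  (1 <= J a k <= k)%nat /\ bracket a (P a) k (J a k).
Proof.
  intros Hk Hinc. destruct k as [|m]; [lia|].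
  assert (Hmon : forall i i', (i <= i' <= S m)%nat -> (P a i <= P a i')%nat).
  { intros i i' Hi. destruct (Nat.eq_dec i i') as [->|]; [lia|].
    pose proof (lt_of_succ_lt (P a) (S m) Hinc i i'). lia. }
  assert (Hpos : (0 < P a (S m))%nat).
  { rewrite <- (P_0 a). apply (lt_of_succ_lt (P a) (S m) Hinc). lia. }
  assert (Hself : INR (P a (S m)) <= a * INR (P a (S m))).
  { pose proof (pos_INR (P a (S m))). nra. }
  destruct (bracket_exists a (P a) (S m) (S m) (P_0 a) Hpos ltac:(lia) Hself)
    as [j [Hj Hb]].
  enough (J a (S m) = j) as -> by (split; assumption).
  apply least_from_unique; [lia|apply idx_ok_iff; [lia|exact Hb]|].
  intros j' Hj' Hb'. apply idx_ok_iff in Hb'; [|lia].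
  apply (bracket_unique a (P a) (S m)); [lra|exact Hmon|lia|lia|exact Hb'|exact Hb].
Qed.

Lemma P_increasing i : (P a i < P a (S i))%nat.
Proof.
  enough (H : forall n i, (i < n)%nat -> (P a i < P a (S i))%nat) by (apply (H (S i)); lia).
  induction n as [|n IH]; intros i' Hi; [lia|].
  destruct (Nat.eq_dec i' n) as [->|]; [|apply IH; lia].
  destruct n as [|m]; [rewrite P_0, P_1; lia|].
  destruct (J_spec_of_prefix (S m) ltac:(lia) IH) as [HJ _].
  rewrite (P_S_of_J_le a (S m)) by lia.
  pose proof (lt_of_succ_lt (P a) (S m) IH 0 (J a (S m)) ltac:(lia)). lia.
Qed.

Lemma P_lt i j : (i < j)%nat -> (P a i < P a j)%nat.
Proof. intros Hij. apply (lt_of_succ_lt (P a) j); [intros; apply P_increasing|lia]. Qed.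

Lemma P_le i j : (i <= j)%nat -> (P a i <= P a j)%nat.
Proof. intros Hij. destruct (Nat.eq_dec i j) as [->|]; [lia|]. pose proof (P_lt i j). lia. Qed.

Lemma P_inj i j : P a i = P a j -> i = j.
Proof.
  intros E. destruct (lt_eq_lt_dec i j) as [[Hlt|]|Hlt]; [|assumption|];
    pose proof (P_lt _ _ Hlt); lia.
Qed.

Lemma P_pos i : (1 <= i)%nat -> 0 < INR (P a i).
Proof. intros Hi. apply lt_0_INR. rewrite <- (P_0 a). apply P_lt. lia. Qed.

Lemma J_spec k : (1 <= k)%nat -> (1 <= J a k <= k)%nat /\ bracket a (P a) k (J a k).
Proof. intros Hk. apply J_spec_of_prefix; [exact Hk|intros; apply P_increasing]. Qed.

Lemma P_S k : (1 <= k)%nat -> P a (S k) = (P a k + P a (J a k))%nat.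
Proof. intros Hk. apply P_S_of_J_le; [exact Hk|apply J_spec; exact Hk]. Qed.

Lemma J_unique k j : (1 <= j <= k)%nat -> bracket a (P a) k j -> j = J a k.
Proof.
  intros Hj Hb. destruct (J_spec k ltac:(lia)) as [HJ HbJ].
  apply (bracket_unique a (P a) k); [lra|intros; apply P_le; lia|exact Hj|exact HJ|exact Hb|exact HbJ].
Qed.

End Increasing.

Lemma P_eq_of_brackets a b : 1 <= a -> 1 <= b ->
  (forall k, (1 <= k)%nat -> bracket b (P a) k (J a k)) -> forall i, P b i = P a i.
Proof.
  intros Ha Hb Hbr.
  enough (H : forall n i, (i <= n)%nat -> P b i = P a i) by (intros i; apply (H i); lia).
  induction n as [|n IH]; intros i Hi.
  { replace i with 0%nat by lia. now rewrite !P_0. }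
  destruct (Nat.eq_dec i (S n)) as [->|]; [|apply IH; lia].
  destruct n as [|k]; [now rewrite !P_1|].
  destruct (J_spec a Ha (S k) ltac:(lia)) as [HJ _].
  assert (HJb : J a (S k) = J b (S k)).
  { apply (J_unique b Hb); [exact HJ|].
    apply (bracket_prefix_ext b (P a)); [intros; symmetry; apply IH; lia|lia|].
    apply Hbr. lia. }
  rewrite (P_S b Hb), (P_S a Ha), <- HJb, !IH by lia. reflexivity.
Qed.

Lemma bracket_of_P_eq a b k : 1 <= a -> 1 <= b -> (1 <= k)%nat ->
  (forall i, P b i = P a i) -> bracket b (P a) k (J a k).
Proof.
  intros Ha Hb Hk Heq.
  destruct (J_spec b Hb k Hk) as [HJ Hbr].
  assert (HJab : J b k = J a k).
  { apply (P_inj a Ha). pose proof (P_S a Ha k Hk). pose proof (P_S b Hb k Hk).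
    rewrite !Heq in *. lia. }
  rewrite <- HJab. apply (bracket_prefix_ext b (P b)); [intros; apply Heq|lia|exact Hbr].
Qed.

Lemma P_differs_of_not_bracket a b k : 1 <= a -> 1 <= b -> (1 <= k)%nat ->
  ~ bracket b (P a) k (J a k) -> exists i, P a i <> P b i.
Proof.
  intros Ha Hb Hk Hn. apply NNPP. intros Hall. apply Hn, bracket_of_P_eq; try assumption.
  intros i. apply NNPP. intros Hne. apply Hall. exists i. congruence.
Qed.

Section Gap.

Variable a : R.
Hypothesis Ha : 1 <= a.

Lemma J_S_le k : (1 <= k)%nat -> (J a (S k) <= S (J a k))%nat.
Proof.
  intros Hk.
  destruct (J_spec a Ha k Hk) as [HJ [_ Hk_le]].
  destruct (J_spec a Ha (S k) ltac:(lia)) as [_ [HSk_lt _]].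
  destruct (J_spec a Ha (J a k) ltac:(lia)) as [_ [_ HJ_le]].
  apply Nat.nlt_ge. intros Hgap.
  assert (Hmon : a * INR (P a (S (J a k))) <= a * INR (P a (pred (J a (S k))))).
  { apply Rmult_le_compat_l, le_INR, P_le; [lra|exact Ha|lia]. }
  rewrite (P_S a Ha k Hk), plus_INR in HSk_lt.
  rewrite (P_S a Ha (J a k) ltac:(lia)), plus_INR in Hmon.
  lra.
Qed.

Lemma gap_nondecreasing k : (k - J a k <= S k - J a (S k))%nat.
Proof.
  destruct k as [|k]; [simpl; lia|].
  pose proof (J_S_le (S k) ltac:(lia)). pose proof (J_spec a Ha (S k) ltac:(lia)). lia.
Qed.

(* For n >= m the step P_{n+1} = P_n + P_{j_n} adds at least P_n / α >= P_m / α. *)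
Lemma P_growth m t : (1 <= m)%nat -> INR (P a m) * (a + INR t) <= a * INR (P a (m + t)).
Proof.
  intros Hm. induction t as [|t IH].
  - rewrite Nat.add_0_r, INR_0. lra.
  - rewrite Nat.add_succ_r, S_INR, (P_S a Ha (m + t) ltac:(lia)), plus_INR.
    destruct (J_spec a Ha (m + t) ltac:(lia)) as [_ [_ Hle]].
    assert (INR (P a m) <= INR (P a (m + t))) by (apply le_INR, P_le; [exact Ha|lia]).
    lra.
Qed.

Lemma gap_bound k : (1 <= k)%nat -> INR (k - J a k) <= a * a.
Proof.
  intros Hk. destruct (J_spec a Ha k Hk) as [HJ [_ Hle]].
  pose proof (P_growth (J a k) (k - J a k) ltac:(lia)) as G.
  replace (J a k + (k - J a k))%nat with k in G by lia.
  pose proof (P_pos a Ha (J a k) ltac:(lia)) as Hp.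
  apply (Rmult_le_reg_l (INR (P a (J a k)))); [exact Hp|].
  nra.
Qed.

Lemma J_eventually_shift : exists K s, forall k, (K <= k)%nat -> J a k = (k - s)%nat.
Proof.
  destruct (INR_unbounded (a * a)) as [D HD].
  destruct (eventually_constant (fun k => k - J a k)%nat D) as [K0 HK0].
  - exact gap_nondecreasing.
  - intros [|k]; [simpl; lia|].
    pose proof (gap_bound (S k) ltac:(lia)). apply Nat.lt_le_incl, INR_lt. lra.
  - exists (S K0), (K0 - J a K0)%nat. intros k Hk.
    specialize (HK0 k ltac:(lia)). simpl in HK0.
    destruct (J_spec a Ha k ltac:(lia)) as [HJ _]. lia.
Qed.

End Gap.

Section Propagation.

Variables (a : R) (K s : nat).
Hypothesis Ha : 1 <= a.
Hypothesis Hshift : forall k, (K <= k)%nat -> J a k = (k - s)%nat.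

(* Past the window the bound at k+1 reads c P_{k-s} <= P_k + P_{k-s}: it is the sum of
   the bounds c P_{k-s-1} <= P_k and c P_{k-2s-1} <= P_{k-s} at k and at k-s, because
   P_{k-s} = P_{k-s-1} + P_{k-2s-1}. *)
Lemma upper_bound_propagates (c : R) :
  (forall k, (1 <= k <= K + 2 * s + 2)%nat -> (2 <= J a k)%nat ->
     c * INR (P a (pred (J a k))) <= INR (P a k)) ->
  forall k, (1 <= k)%nat -> (2 <= J a k)%nat -> c * INR (P a (pred (J a k))) <= INR (P a k).
Proof.
  intros Hwin k. induction k as [k IH] using lt_wf_ind. intros Hk HJk.
  destruct (le_lt_dec k (K + 2 * s + 2)) as [Hle|Hgt]; [apply Hwin; [lia|exact HJk]|].
  destruct k as [|k]; [lia|].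
  pose proof (IH k ltac:(lia)) as I1. pose proof (IH (k - s)%nat ltac:(lia)) as I2.
  rewrite Hshift in I1, I2, HJk |- * by lia.
  specialize (I1 ltac:(lia) ltac:(lia)). specialize (I2 ltac:(lia) ltac:(lia)).
  rewrite (P_S a Ha k), Hshift, plus_INR by lia.
  replace (pred (S k - s)) with (S (k - s - 1)) by lia.
  rewrite (P_S a Ha (k - s - 1)), Hshift, plus_INR by lia.
  replace (pred (k - s)) with (k - s - 1)%nat in I1 by lia.
  replace (pred (k - s - s)) with (k - s - 1 - s)%nat in I2 by lia.
  replace (S (k - s - 1)) with (k - s)%nat in * by lia.
  lra.
Qed.

End Propagation.

Definition lower_ratio (a : R) (k : nat) : R := INR (P a k) / INR (P a (J a k)).

(* Only meaningful when [2 <= J a k]; for [J a k = 1] the denominator is [P_0 = 0]. *)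
Definition upper_ratio (a : R) (k : nat) : R := INR (P a k) / INR (P a (pred (J a k))).

Lemma bracket_iff_ratios a b k : 1 <= a -> (1 <= k)%nat ->
  bracket b (P a) k (J a k) <-> lower_ratio a k <= b /\ ((2 <= J a k)%nat -> b < upper_ratio a k).
Proof.
  intros Ha Hk. destruct (J_spec a Ha k Hk) as [HJ _].
  unfold bracket, lower_ratio, upper_ratio.
  rewrite Rle_div_l by (apply P_pos; [exact Ha|lia]).
  destruct (Nat.eq_dec (J a k) 1) as [->|HJ1].
  - simpl pred. rewrite P_0, INR_0, Rmult_0_r.
    pose proof (P_pos a Ha k Hk) as Hpos.
    split; [intros [_ H]; split; [exact H|lia]|intros [H _]; split; [lra|exact H]].
  - rewrite <- Rlt_div_r by (apply P_pos; [exact Ha|lia]).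
    split; [intros [H1 H2]; split; [exact H2|intros; exact H1]
           |intros [H1 H2]; split; [apply H2; lia|exact H1]].
Qed.

Lemma lower_ratio_ge_1 a k : 1 <= a -> (1 <= k)%nat -> 1 <= lower_ratio a k.
Proof.
  intros Ha Hk. destruct (J_spec a Ha k Hk) as [HJ _].
  apply Rle_div_r; [apply P_pos; [exact Ha|lia]|].
  rewrite Rmult_1_l. apply le_INR, P_le; [exact Ha|lia].
Qed.

Lemma upper_ratio_min_attained a : 1 <= a ->
  exists k0, (1 <= k0)%nat /\ (2 <= J a k0)%nat /\
    forall k, (1 <= k)%nat -> (2 <= J a k)%nat -> upper_ratio a k0 <= upper_ratio a k.
Proof.
  intros Ha. destruct (J_eventually_shift a Ha) as [K [s Hshift]].
  set (N := (K + 2 * s + 2)%nat).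
  set (window := filter (fun k => Nat.leb 2 (J a k)) (seq 1 N)).
  assert (Hwin : forall k, In k window <-> (1 <= k <= N)%nat /\ (2 <= J a k)%nat).
  { intros k. unfold window. rewrite filter_In, in_seq, Nat.leb_le. lia. }
  destruct (list_argmin (upper_ratio a) window) as [k0 [Hk0 Hmin]].
  { assert (HN : In N window) by (apply Hwin; rewrite Hshift by lia; lia).
    destruct window; [contradiction|discriminate]. }
  apply Hwin in Hk0. exists k0. split; [lia|split; [tauto|]].
  intros k Hk HJk.
  assert (Hden : forall k, (2 <= J a k)%nat -> INR (P a (pred (J a k))) > 0)
    by (intros k' H; apply P_pos; [exact Ha|lia]).
  apply (Rle_div_r (upper_ratio a k0)); [exact (Hden k HJk)|].
  apply (upper_bound_propagates a K s Ha Hshift); [|exact Hk|exact HJk].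
  intros k' Hk' HJk'. apply (Rle_div_r (upper_ratio a k0)); [exact (Hden k' HJk')|]. apply Hmin, Hwin. tauto.
Qed.

Theorem mainTheorem1 (alpha : R) (halpha : 1 <= alpha) :
  exists alpha0 alpha1 : R,
    alpha0 <= alpha < alpha1 /\
    (forall beta : R, alpha0 <= beta < alpha1 -> forall i : nat, P beta i = P alpha i) /\
    (forall beta : R, 1 <= beta -> ~ (alpha0 <= beta < alpha1) ->
       exists i : nat, P alpha i <> P beta i).
Proof.
  set (lower := fun x => exists k, (1 <= k)%nat /\ x = lower_ratio alpha k).
  assert (Hself : forall k, (1 <= k)%nat -> lower_ratio alpha k <= alpha /\
                    ((2 <= J alpha k)%nat -> alpha < upper_ratio alpha k)).
  { intros k Hk. apply bracket_iff_ratios; [exact halpha|exact Hk|apply J_spec; assumption]. }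
  destruct (completeness lower) as [alpha0 [Hub Hlub]].
  { exists alpha. intros x [k [Hk ->]]. apply Hself, Hk. }
  { exists (lower_ratio alpha 1). now exists 1%nat. }
  assert (H1 : 1 <= alpha0).
  { apply (Rle_trans _ (lower_ratio alpha 1)); [apply lower_ratio_ge_1; auto|].
    apply Hub. now exists 1%nat. }
  destruct (upper_ratio_min_attained alpha halpha) as [k0 [Hk0 [HJk0 Hmin]]].
  exists alpha0, (upper_ratio alpha k0). split; [split|split].
  - apply Hlub. intros x [k [Hk ->]]. apply Hself, Hk.
  - apply Hself; assumption.
  - intros beta [Hlo Hhi]. apply P_eq_of_brackets; [exact halpha|lra|].
    intros k Hk. apply bracket_iff_ratios; [exact halpha|exact Hk|]. split.
    + apply (Rle_trans _ alpha0); [apply Hub; now exists k|exact Hlo].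
    + intros HJk. specialize (Hmin k Hk HJk). lra.
  - intros beta Hbeta Hout.
    destruct (Rlt_le_dec beta alpha0) as [Hlt|Hge].
    + destruct (not_all_not_ex _ (fun k => (1 <= k)%nat /\ beta < lower_ratio alpha k))
        as [k [Hk Hk_lt]].
      { intros Hno. apply (Rlt_not_le _ _ Hlt), Hlub. intros x [k [Hk ->]].
        apply Rnot_lt_le. intros Hx. exact (Hno k (conj Hk Hx)). }
      apply (P_differs_of_not_bracket alpha beta k halpha Hbeta Hk).
      rewrite bracket_iff_ratios by assumption. lra.
    + apply (P_differs_of_not_bracket alpha beta k0 halpha Hbeta Hk0).
      rewrite bracket_iff_ratios by assumption. intros [_ Hhi].
      apply Hout. split; [exact Hge|exact (Hhi HJk0)].
Qed.
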